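(* For every $g:E^2\times E^2\to\mathbb R$, $$\log\varphi_1(g)\ge2\log\varphi_0(g).$$
   Context: Let $E$ be a finite set and $P,Q$ irreducible aperiodic stochastic $E\times E$ matrices. For $g:E^2\times E^2\to\mathbb R$, $\varphi_0(g)$ is the spectral radius of the $E^2\times E^2$ matrix $\Phi_0(g)_{(x,y),(x',y')}=\exp(g(x,y,x',y'))P_{x,x'}Q_{y,y'}$ and $\varphi_1(g)$ the spectral radius of the $E^3\times E^3$ matrix $\Phi_1(g)_{(x,y,z),(x',y',z')}=\exp(g(x,y,x',y')+g(x,z,x',z'))P_{x,x'}Q_{y,y'}Q_{z,z'}$. *)

From mathcomp Require Import all_boot all_algebra.
From mathcomp Require Import classical_sets reals sequences exp.
From mathcomp.real_closed Require Import complex.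

Set Implicit Arguments.
Unset Strict Implicit.
Unset Printing Implicit Defensive.

Import GRing.Theory Num.Theory.
Local Open Scope ring_scope.
Local Open Scope classical_set_scope.

Section Defs.
Variable R : realType.

Fixpoint fpow (T : finType) (A : T -> T -> R) (k : nat) : T -> T -> R :=
  match k with
  | 0 => fun x y => (x == y)%:R
  | k'.+1 => fun x y => \sum_(z : T) fpow A k' x z * A z y
  end.

Definition stochastic (T : finType) (A : T -> T -> R) : Prop :=
  (forall x y, 0 <= A x y) /\ (forall x, \sum_(y : T) A x y = 1).

Definition irreducible (T : finType) (A : T -> T -> R) : Prop :=
  forall x y, exists k : nat, 0 < fpow A k x y.

(* aperiodic: every state has period 1, i.e. the gcd of the return times
   {k >= 1 : A^k x x > 0} is 1 (1 is its only common divisor) *)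
Definition aperiodic (T : finType) (A : T -> T -> R) : Prop :=
  forall x (d : nat),
    (forall k : nat, (0 < k)%N -> 0 < fpow A k x x -> (d %| k)%N) -> d = 1%N.

Definition fmx (T : finType) (A : T -> T -> R) : 'M[R]_#|T| :=
  \matrix_(i, j) A (enum_val i) (enum_val j).

Definition spectral_radius (T : finType) (A : T -> T -> R) : R :=
  sup ((fun z : R[i] => Normc.normc z) @`
         [set z : R[i] | eigenvalue (map_mx (real_complex R) (fmx A)) z]).

Variable E : finType.
Variables P Q : E -> E -> R.

Definition Phi0 (g : E -> E -> E -> E -> R) : (E * E)%type -> (E * E)%type -> R :=
  fun a b => let: (x, y) := a in let: (x', y') := b in
    expR (g x y x' y') * P x x' * Q y y'.

Definition Phi1 (g : E -> E -> E -> E -> R) :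
    (E * E * E)%type -> (E * E * E)%type -> R :=
  fun a b => let: (x, y, z) := a in let: (x', y', z') := b in
    expR (g x y x' y' + g x z x' z') * P x x' * Q y y' * Q z z'.

Definition varphi0 g := spectral_radius (Phi0 g).
Definition varphi1 g := spectral_radius (Phi1 g).

End Defs.

From mathcomp Require Import all_boot all_order all_algebra.
From mathcomp Require Import classical_sets reals sequences exp.
From mathcomp.real_closed Require Import complex.
From mathcomp Require Import ring lra.
Import Order.TTheory GRing.Theory Num.Theory.
Local Open Scope complex_scope.
Local Open Scope ring_scope.
Local Open Scope classical_set_scope.

Set Implicit Arguments.
Unset Strict Implicit.
Unset Printing Implicit Defensive.

(* For a nonnegative matrix A the spectral radius is the exponential growth
   rate of the total mass s_A(k) of A^k: every eigenvalue z satisfies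
   |z|^k <= s_A(k), and a Schur triangularisation of A shows s_A(k) = O(r^k)
   for every r above the largest eigenvalue modulus.  It therefore suffices to
   compare masses, s_0(k)^2 <= |E| s_1(k).  Given the path of the x-coordinate,
   the y- and z-coordinates of Phi_1 evolve as two independent copies of the
   y-coordinate of Phi_0, so the row sums of Phi_1^k are second moments where
   those of Phi_0^k are first moments, and Jensen's inequality compares them. *)

Lemma sumr_ge_term (R : numDomainType) (I : finType) (F : I -> R) i :
  (forall j, 0 <= F j) -> F i <= \sum_j F j.
Proof. by move=> F_ge0; rewrite (bigD1 i) //= lerDl sumr_ge0. Qed.

Lemma sum_enum_val (V : nmodType) (T : finType) (F : T -> V) :
  \sum_(i < #|T|) F (enum_val i) = \sum_a F a.
Proof. by rewrite -big_enum_val. Qed.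

Lemma map_mxX (aR rR : pzRingType) (f : {rmorphism aR -> rR}) n
    (A : 'M[aR]_n) k :
  map_mx f (A ^+ k) = map_mx f A ^+ k.
Proof.
elim: k => [|k IHk]; first by rewrite !expr0 map_mx1.
by rewrite !exprS -!mulmxE map_mxM IHk.
Qed.

Lemma conjmxX (F : fieldType) n (V A : 'M[F]_n) k : V \in unitmx ->
  conjmx V A ^+ k = conjmx V (A ^+ k).
Proof.
move=> V_unit; rewrite !conjumx //; elim: k => [|k IHk].
  by rewrite !expr0 mulmx1 mulmxV.
rewrite exprS IHk -!mulmxE !mulmxA mulmxKV // exprS -mulmxE.
by rewrite !mulmxA.
Qed.

Lemma bernoulli_ineq (R : realDomainType) (q : R) k :
  1 <= q -> 1 + k%:R * (q - 1) <= q ^+ k.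
Proof.
move=> q_ge1; elim: k => [|k IHk]; first by rewrite mul0r addr0 expr0.
have q_ge0 : 0 <= q - 1 by rewrite subr_ge0.
have k_ge0 : 0 <= k%:R :> R by rewrite ler0n.
have : q * (1 + k%:R * (q - 1)) <= q ^+ k.+1.
  by rewrite exprS; apply: ler_wpM2l => //; apply: le_trans q_ge1.
apply: le_trans; rewrite -natr1.
have : 0 <= k%:R * ((q - 1) * (q - 1)) by rewrite !mulr_ge0.
nra.
Qed.

Lemma geometric_not_dominated (R : archiRealFieldType) (c r K : R) :
  0 < r -> r < c -> ~ (forall k, c ^+ k <= K * r ^+ k).
Proof.
move=> r_gt0 lt_rc dom.
pose q := c / r.
have q_gt1 : 1 < q by rewrite ltr_pdivlMr // mul1r.
have q_bounded k : q ^+ k <= `|K|.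
  rewrite expr_div_n ler_pdivrMr ?exprn_gt0 //; apply: le_trans (dom k) _.
  by apply: ler_wpM2r; [rewrite exprn_ge0 // ltW | exact: ler_norm].
have q1_gt0 : 0 < q - 1 by rewrite subr_gt0.
have bound_ge0 : 0 <= `|K| / (q - 1) by rewrite divr_ge0 // ltW.
have := archi_boundP bound_ge0; set k := Num.Def.archi_bound _ => lt_k.
have := @bernoulli_ineq _ q k (ltW q_gt1); have := q_bounded k.
rewrite ltr_pdivrMr // in lt_k; move: lt_k; set t := k%:R * (q - 1); lra.
Qed.

Section SumInequalities.
Variable R : realFieldType.

Lemma sqr_wmean_le (I : finType) (p u : I -> R) : (forall i, 0 <= p i) ->
  \sum_i p i = 1 -> (\sum_i p i * u i) ^+ 2 <= \sum_i p i * u i ^+ 2.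
Proof.
move=> p_ge0 p_sum1; set m := \sum_i p i * u i.
have : 0 <= \sum_i p i * (u i - m) ^+ 2.
  by apply: sumr_ge0 => i _; rewrite mulr_ge0 ?sqr_ge0.
have -> : \sum_i p i * (u i - m) ^+ 2 =
    \sum_i p i * u i ^+ 2 - (m *+ 2) * m + m ^+ 2 * \sum_i p i.
  rewrite -/m mulr_sumr mulr_sumr -sumrB -big_split /=.
  by apply: eq_bigr => i _; ring.
rewrite p_sum1; lra.
Qed.

Lemma sqr_sum_le_card (I : finType) (u : I -> R) :
  (\sum_i u i) ^+ 2 <= #|I|%:R * \sum_i u i ^+ 2.
Proof.
have [I0 | I_gt0] := posnP #|I|.
  by rewrite !big1 ?expr0n ?mulr0 // => i _; have := card0_eq I0 i; rewrite !inE.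
have N_gt0 : 0 < #|I|%:R :> R by rewrite ltr0n.
have Ninv_ge0 : 0 <= #|I|%:R^-1 :> R by rewrite invr_ge0 ltW.
have := @sqr_wmean_le I (fun=> #|I|%:R^-1) u (fun=> Ninv_ge0).
have w_sum1 : \sum_(i : I) #|I|%:R^-1 = 1 :> R.
  by rewrite sumr_const -[_ *+ _]mulr_natr mulVf ?gt_eqF.
move=> /(_ w_sum1); rewrite -!mulr_sumr.
set N := #|I|%:R; set s := \sum_i u i; set t := \sum_i u i ^+ 2 => mean_le.
have N_neq0 : N != 0 by rewrite gt_eqF.
have -> : s ^+ 2 = N ^+ 2 * (N^-1 * s) ^+ 2.
  by rewrite exprMn mulrA -exprMn divff // expr1n mul1r.
have -> : N * t = N ^+ 2 * (N^-1 * t) by rewrite mulrA expr2 -(mulrA N) divff // mulr1.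
by apply: ler_wpM2l => //; rewrite exprn_ge0 // ltW.
Qed.
End SumInequalities.

Section KernelSums.
Variables (R : comPzRingType) (I J : finType).

Lemma sum_kernel_assoc (c : I -> R) (a : I -> J -> R) (H : J -> R) :
  \sum_y c y * (\sum_y' a y y' * H y') = \sum_y' (\sum_y c y * a y y') * H y'.
Proof.
under eq_bigr do rewrite mulr_sumr.
rewrite exchange_big; apply: eq_bigr => y' _; rewrite mulr_suml.
by apply: eq_bigr => y _; rewrite mulrA.
Qed.

Lemma sum2_kernel_assoc (c : I -> R) (a : I -> J -> R) (H : J -> J -> R) :
  \sum_y \sum_z c y * c z * (\sum_y' \sum_z' a y y' * a z z' * H y' z') =
  \sum_y' \sum_z' (\sum_y c y * a y y') * (\sum_z c z * a z z') * H y' z'.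
Proof.
transitivity (\sum_y \sum_z \sum_y' \sum_z' c y * c z * (a y y' * a z z' * H y' z')).
  apply: eq_bigr => y _; apply: eq_bigr => z _; rewrite mulr_sumr.
  by apply: eq_bigr => y' _; rewrite mulr_sumr.
transitivity (\sum_y' \sum_z' \sum_y \sum_z c y * c z * (a y y' * a z z' * H y' z')).
  under eq_bigr do rewrite exchange_big.
  under eq_bigr do under eq_bigr do rewrite exchange_big.
  by rewrite exchange_big; apply: eq_bigr => y' _; rewrite exchange_big.
apply: eq_bigr => y' _; apply: eq_bigr => z' _.
rewrite mulr_suml mulr_suml; apply: eq_bigr => y _.
by rewrite mulr_sumr mulr_suml; apply: eq_bigr => z _; ring.
Qed.

Lemma sum2_mixture_exchange (d : J -> J -> R) (p : I -> R) (G : I -> J -> J -> R) :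
  \sum_y \sum_z d y z * (\sum_x' p x' * G x' y z) =
  \sum_x' p x' * \sum_y \sum_z d y z * G x' y z.
Proof.
transitivity (\sum_y \sum_x' \sum_z d y z * (p x' * G x' y z)).
  apply: eq_bigr => y _; rewrite exchange_big /=.
  by apply: eq_bigr => z _; rewrite mulr_sumr.
rewrite exchange_big; apply: eq_bigr => x' _; rewrite mulr_sumr.
by apply: eq_bigr => y _; rewrite mulr_sumr; apply: eq_bigr => z _; ring.
Qed.

End KernelSums.

Section Normc.
Variable R : rcfType.
Local Notation normc := (@Normc.normc R).

Lemma normc_ge0 (z : R[i]) : 0 <= normc z.
Proof. by case: z => a b /=; rewrite sqrtr_ge0. Qed.

Lemma normc_eq0 (z : R[i]) : (normc z == 0) = (z == 0).
Proof. by apply/eqP/eqP => [/Normc.eq0_normc // | ->]; exact: Normc.normc0. Qed.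

Lemma normc_real (x : R) : normc x%:C = `|x|.
Proof. by rewrite /= expr0n /= addr0 sqrtr_sqr. Qed.

Lemma normcX (z : R[i]) k : normc (z ^+ k) = normc z ^+ k.
Proof.
elim: k => [|k IHk]; first by rewrite !expr0 Normc.normc1.
by rewrite !exprS Normc.normcM IHk.
Qed.

Lemma normc_sum (I : finType) (F : I -> R[i]) :
  normc (\sum_i F i) <= \sum_i normc (F i).
Proof.
elim/big_rec2: _ => [|i y1 y2 _ IH]; first by rewrite Normc.normc0.
by apply: le_trans (le_normcD _ _) _; rewrite lerD2l.
Qed.


Definition mx_normc_sum n (A : 'M[R[i]]_n) := \sum_i \sum_j normc (A i j).

Lemma mx_normc_sum_ge0 n (A : 'M[R[i]]_n) : 0 <= mx_normc_sum A.
Proof. by apply: sumr_ge0 => i _; apply: sumr_ge0 => j _; exact: normc_ge0. Qed.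

Lemma mx_normc_sum_mul3_le n (A B C : 'M[R[i]]_n) beta :
  (forall a b, normc (B a b) <= beta) ->
  mx_normc_sum (A *m B *m C) <= mx_normc_sum A * beta * mx_normc_sum C.
Proof.
move=> B_le; apply: (@le_trans _ _ (\sum_i \sum_j \sum_b \sum_a
    normc (A i a) * beta * normc (C b j))).
  apply: ler_sum => i _; apply: ler_sum => j _; rewrite mxE.
  apply: le_trans (normc_sum _) _; apply: ler_sum => b _.
  rewrite Normc.normcM -mulr_suml; apply: ler_wpM2r; first exact: normc_ge0.
  rewrite mxE; apply: le_trans (normc_sum _) _; apply: ler_sum => a _.
  by rewrite Normc.normcM; apply: ler_wpM2l; [exact: normc_ge0 | exact: B_le].
rewrite le_eqVlt; apply/orP; left; apply/eqP.
rewrite /mx_normc_sum mulr_suml mulr_suml; apply: eq_bigr => i _.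
rewrite exchange_big /= mulr_sumr; apply: eq_bigr => b _.
by rewrite mulr_sumr; apply: eq_bigr => j _; rewrite !mulr_suml.
Qed.

Lemma normc_mxpow_weighted_le n (T : 'M[R[i]]_n) (w : 'I_n -> R) r :
  0 <= r -> (forall i, 0 <= w i) ->
  (forall i, \sum_a normc (T i a) * w a <= r * w i) ->
  forall k i, \sum_j normc ((T ^+ k) i j) * w j <= r ^+ k * w i.
Proof.
move=> r_ge0 w_ge0 T_w; elim=> [|k IHk] i.
  rewrite expr0 mul1r (bigD1 i) //= big1 ?addr0 => [|j ji]; rewrite mxE.
    by rewrite eqxx Normc.normc1 mul1r.
  by rewrite eq_sym (negbTE ji) Normc.normc0 mul0r.
apply: (@le_trans _ _
    (\sum_j \sum_a normc (T i a) * normc ((T ^+ k) a j) * w j)).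
  apply: ler_sum => j _; rewrite exprS -mulmxE mxE.
  apply: le_trans (ler_wpM2r (w_ge0 j) (normc_sum _)) _; rewrite mulr_suml.
  by apply: ler_sum => a _; rewrite Normc.normcM.
rewrite exchange_big /=.
apply: (@le_trans _ _ (\sum_a normc (T i a) * (r ^+ k * w a))).
  apply: ler_sum => a _; under eq_bigr do rewrite -mulrA.
  by rewrite -mulr_sumr; apply: ler_wpM2l; [exact: normc_ge0 | exact: IHk].
under eq_bigr do rewrite mulrCA.
rewrite -mulr_sumr exprSr -mulrA; apply: ler_wpM2l; last exact: T_w.
exact: exprn_ge0.
Qed.

(* Weighting column a by W^a, the diagonal of T contributes at most rho and the
   strictly lower part is damped by 1/W, which is small for W large. *)
Lemma trigmx_row_weight n (T : 'M[R[i]]_n) rho r :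
  is_trig_mx T -> (forall i, normc (T i i) <= rho) -> rho < r ->
  exists2 W, 1 <= W & forall i, \sum_a normc (T i a) * W ^+ a <= r * W ^+ i.
Proof.
move=> /is_trig_mxP T_trig T_diag lt_rho_r.
have gap : 0 < r - rho by rewrite subr_gt0.
pose W := mx_normc_sum T / (r - rho) + 1.
have W_ge1 : 1 <= W by rewrite lerDr divr_ge0 ?mx_normc_sum_ge0 // ltW.
have W_gt0 : 0 < W := lt_le_trans ltr01 W_ge1.
have total_le : mx_normc_sum T / W <= r - rho.
  rewrite ler_pdivrMr // /W mulrDr mulr1 mulrCA divff ?mulr1 ?lerDl ?ltW //.
  by rewrite gt_eqF.
exists W => // i; rewrite (bigD1 i) //=.
have row_le : \sum_(a | a != i) normc (T i a) <= mx_normc_sum T.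
  apply: le_trans (@sumr_ge_term _ _ (fun i => \sum_a normc (T i a)) i _).
    by rewrite [X in _ <= X](bigD1 i) //= lerDr normc_ge0.
  by move=> j; apply: sumr_ge0 => a _; exact: normc_ge0.
have below : \sum_(a | a != i) normc (T i a) * W ^+ a <= (r - rho) * W ^+ i.
  apply: (@le_trans _ _ (\sum_(a | a != i) normc (T i a) * (W ^+ i / W))).
    apply: ler_sum => a a_neq_i; case: (ltngtP a i) => [lt_ai | lt_ia | eq_ai].
    - apply: ler_wpM2l; first exact: normc_ge0.
      by rewrite ler_pdivlMr // -exprSr; apply: ler_weXn2l.
    - by rewrite T_trig // Normc.normc0 !mul0r.
    - by move: a_neq_i; rewrite (val_inj eq_ai) eqxx.
  rewrite -mulr_suml mulrA mulrAC; apply: ler_wpM2r; first exact: exprn_ge0 (ltW W_gt0).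
  apply: le_trans total_le; apply: ler_wpM2r => //.
  by rewrite invr_ge0 ltW.
have diag := ler_wpM2r (exprn_ge0 i (ltW W_gt0)) (T_diag i).
by rewrite mulrBl in below; lra.
Qed.

Lemma trigmx_pow_bound n (T : 'M[R[i]]_n) rho r :
  is_trig_mx T -> (forall i, normc (T i i) <= rho) -> 0 <= rho -> rho < r ->
  exists B, forall k i j, normc ((T ^+ k) i j) <= B * r ^+ k.
Proof.
move=> T_trig T_diag rho_ge0 lt_rho_r.
have r_ge0 : 0 <= r by apply/ltW/(le_lt_trans rho_ge0).
have [W W_ge1 T_W] := trigmx_row_weight T_trig T_diag lt_rho_r.
have W_ge0 : 0 <= W by apply: le_trans W_ge1.
have Tk_W := normc_mxpow_weighted_le r_ge0 (fun i => exprn_ge0 i W_ge0) T_W.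
exists (W ^+ n) => k i j.
apply: (@le_trans _ _ (\sum_j normc ((T ^+ k) i j) * W ^+ j)).
  apply: le_trans (@sumr_ge_term _ _ (fun j => normc ((T ^+ k) i j) * W ^+ j) j _).
    by rewrite ler_peMr ?normc_ge0 ?exprn_ege1.
  by move=> j'; rewrite mulr_ge0 ?normc_ge0 ?exprn_ge0.
apply: le_trans (Tk_W k i) _; rewrite mulrC; apply: ler_wpM2r.
  exact: exprn_ge0.
by apply: ler_weXn2l => //; exact: ltnW.
Qed.
End Normc.

Section NonnegativeMatrix.
Variable R : realType.
Local Notation normc := (@Normc.normc R).
Local Notation cmx M := (map_mx (real_complex R) M).

Definition mxpow_mass n (M : 'M[R]_n) k := \sum_i \sum_j (M ^+ k) i j.

Variables (n : nat) (M : 'M[R]_n).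
Hypothesis M_ge0 : forall i j, 0 <= M i j.

Lemma mxpow_ge0 k i j : 0 <= (M ^+ k) i j.
Proof.
elim: k i j => [|k IHk] i j; first by rewrite expr0 mxE ler0n.
by rewrite exprS -mulmxE mxE; apply: sumr_ge0 => l _; exact: mulr_ge0.
Qed.

Lemma mxpow_mass_ge0 k : 0 <= mxpow_mass M k.
Proof. by apply: sumr_ge0 => i _; apply: sumr_ge0 => j _; exact: mxpow_ge0. Qed.

Lemma mxpow_mass_normc k : mxpow_mass M k = mx_normc_sum (cmx M ^+ k).
Proof.
rewrite /mx_normc_sum -map_mxX; apply: eq_bigr => i _; apply: eq_bigr => j _.
by rewrite mxE normc_real ger0_norm ?mxpow_ge0.
Qed.

Lemma eigenvalue_normX_le_mass l k :
  eigenvalue (cmx M) l -> normc l ^+ k <= mxpow_mass M k.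
Proof.
move=> /eigenvalueP [v v_eigen v_neq0].
have vMk : v *m cmx M ^+ k = l ^+ k *: v.
  elim: k => [|k IHk]; first by rewrite expr0 mulmx1 scale1r.
  by rewrite exprSr -mulmxE mulmxA IHk -scalemxAl v_eigen scalerA exprSr.
pose V := \sum_j normc (v 0 j).
have V_gt0 : 0 < V.
  rewrite lt_def sumr_ge0 ?andbT => [|j _]; last exact: normc_ge0.
  apply: contra v_neq0 => /eqP/psumr_eq0P V0; apply/eqP/rowP => j.
  by rewrite mxE; apply/eqP; rewrite -normc_eq0 V0 // => i _; exact: normc_ge0.
rewrite -(ler_pM2l V_gt0).
have -> : V * normc l ^+ k = \sum_j normc ((v *m cmx M ^+ k) 0 j).
  by rewrite mulr_suml; apply: eq_bigr => j _; rewrite vMk mxE Normc.normcM normcX mulrC.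
apply: (@le_trans _ _ (\sum_j \sum_i normc (v 0 i) * (M ^+ k) i j)).
  apply: ler_sum => j _; rewrite mxE; apply: le_trans (normc_sum _) _.
  apply: ler_sum => i _; rewrite Normc.normcM -map_mxX mxE normc_real.
  by rewrite ger0_norm ?mxpow_ge0.
rewrite exchange_big /= /mxpow_mass mulr_suml; apply: ler_sum => i _.
rewrite -mulr_sumr; apply: ler_wpM2l; first exact: normc_ge0.
apply: (@sumr_ge_term _ _ (fun i => \sum_j (M ^+ k) i j)) => i'.
by apply: sumr_ge0 => j _; exact: mxpow_ge0.
Qed.

Lemma mxpow_mass_geometric U rho r :
  U \in unitmx -> is_trig_mx (conjmx U (cmx M)) ->
  (forall i, normc (conjmx U (cmx M) i i) <= rho) -> 0 <= rho -> rho < r ->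
  exists K, forall k, mxpow_mass M k <= K * r ^+ k.
Proof.
move=> U_unit T_trig T_diag rho_ge0 lt_rho_r.
have [B T_B] := trigmx_pow_bound T_trig T_diag rho_ge0 lt_rho_r.
exists (mx_normc_sum (invmx U) * B * mx_normc_sum U) => k.
rewrite mxpow_mass_normc -{1}(conjmxK (cmx M) U_unit) conjmxX ?unitmx_inv //.
rewrite conjVmx //; apply: le_trans (mx_normc_sum_mul3_le _ _ (T_B k)) _.
by rewrite mulrA mulrAC.
Qed.

Lemma dominant_eigenvalue : (0 < n)%N ->
  exists2 l, eigenvalue (cmx M) l &
    forall c K, 0 <= c -> (forall k, c ^+ k <= K * mxpow_mass M k) -> c <= normc l.
Proof.
(* l is a diagonal entry of maximal modulus of a Schur form of M. *)
move=> n_gt0; have [U U_unitary] := Schur (cmx M) n_gt0.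
have U_unit : U \in unitmx := unitarymx_unit U_unitary.
rewrite /similar_to => T_trig; set T := conjmx U (cmx M) in T_trig.
have [i0 _ T_max] := @real_arg_maxP R 'I_n (Ordinal n_gt0) xpredT
  (fun i => normc (T i i)) isT (fun i _ => ger0_real (normc_ge0 _)).
exists (T i0 i0).
  apply: (eigenvalue_conjmx (V := U)); rewrite ?stablemx_unit ?row_free_unit //.
  rewrite [_ \in _]eigenvalue_root_char char_poly_trig // rootE horner_prod (bigD1 i0) //=.
  by rewrite hornerXsubC subrr mul0r.
move=> c K c_ge0 c_dom; rewrite leNgt; apply/negP => lt_l_c.
pose r := (normc (T i0 i0) + c) / 2.
have [lt_l_r lt_r_c] := midf_lt lt_l_c.
have [K' mass_le] := mxpow_mass_geometric U_unit T_trig (fun i => T_max i isT)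
  (normc_ge0 _) lt_l_r.
apply: (@geometric_not_dominated _ c r (`|K| * K')) => //.
  exact: le_lt_trans (normc_ge0 _) lt_l_r.
move=> k; apply: le_trans (c_dom k) _.
apply: le_trans (ler_wpM2r (mxpow_mass_ge0 k) (ler_norm K)) _.
by rewrite -mulrA ler_wpM2l.
Qed.

End NonnegativeMatrix.

Section SpectralRadius.
Variables (R : realType) (T : finType).
Local Notation normc := (@Normc.normc R).
Local Notation cmx M := (map_mx (real_complex R) M).
Implicit Types A : T -> T -> R.

Fixpoint pow_rowsum A k : T -> R :=
  if k is k'.+1 then fun a => \sum_b A a b * pow_rowsum A k' b else fun _ => 1.

Definition pow_mass A k := \sum_a pow_rowsum A k a.

Lemma mxpow_rowsum_fmx A k i : \sum_j (fmx A ^+ k) i j = pow_rowsum A k (enum_val i).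
Proof.
elim: k i => [|k IHk] i.
  rewrite expr0 (bigD1 i) //= big1 ?addr0 => [|j ji]; rewrite mxE.
    by rewrite eqxx.
  by rewrite eq_sym (negbTE ji).
rewrite exprS -mulmxE /=; under eq_bigr do rewrite mxE.
rewrite exchange_big /= -[RHS]sum_enum_val; apply: eq_bigr => l _.
by rewrite -mulr_sumr IHk mxE.
Qed.

Lemma mxpow_mass_fmx A k : mxpow_mass (fmx A) k = pow_mass A k.
Proof.
rewrite /pow_mass -sum_enum_val.
by apply: eq_bigr => i _; rewrite mxpow_rowsum_fmx.
Qed.

Lemma spectral_radius_eq0 A : (T -> False) -> spectral_radius A = 0.
Proof.
move=> T0; rewrite /spectral_radius.
have -> : [set z : R[i] | eigenvalue (cmx (fmx A)) z]%classic = set0.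
  apply/seteqP; split => // z /= /eigenvalueP [v _ /negP []].
  by apply/eqP/rowP => j; case: (T0 (enum_val j)).
by rewrite image_set0 sup0.
Qed.

Section Nonnegative.
Variable A : T -> T -> R.
Hypothesis A_ge0 : forall a b, 0 <= A a b.

Lemma fmx_ge0 i j : 0 <= fmx A i j.
Proof. by rewrite mxE. Qed.

Lemma pow_rowsum_ge0 k a : 0 <= pow_rowsum A k a.
Proof.
elim: k a => [|k IHk] a /=; first exact: ler01.
by apply: sumr_ge0 => b _; exact: mulr_ge0.
Qed.

Lemma pow_mass_ge0 k : 0 <= pow_mass A k.
Proof. by apply: sumr_ge0 => a _; exact: pow_rowsum_ge0. Qed.

Lemma eigenvalue_normX_le_pow_mass z k :
  eigenvalue (cmx (fmx A)) z -> normc z ^+ k <= pow_mass A k.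
Proof. by rewrite -mxpow_mass_fmx; apply: (eigenvalue_normX_le_mass fmx_ge0). Qed.

Lemma normc_eigenvalue_le_spectral_radius z :
  eigenvalue (cmx (fmx A)) z -> normc z <= spectral_radius A.
Proof.
move=> z_eigen; apply: sup_ubound; last by exists z.
exists (pow_mass A 1) => _ [z' z'_eigen <-].
by rewrite -[normc z']expr1 eigenvalue_normX_le_pow_mass.
Qed.

Variable t : T.

Let card_gt0 : (0 < #|T|)%N.
Proof. by apply/card_gt0P; exists t. Qed.

Lemma spectral_radius_ge c K : 0 <= c ->
  (forall k, c ^+ k <= K * pow_mass A k) -> c <= spectral_radius A.
Proof.
move=> c_ge0 c_dom; have [l l_eigen l_dom] := dominant_eigenvalue fmx_ge0 card_gt0.
apply: le_trans (normc_eigenvalue_le_spectral_radius l_eigen).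
by apply: (l_dom _ K) => // k; rewrite mxpow_mass_fmx.
Qed.

Lemma spectral_radius_le r :
  (forall z, eigenvalue (cmx (fmx A)) z -> normc z <= r) -> spectral_radius A <= r.
Proof.
move=> r_ub; have [l l_eigen _] := dominant_eigenvalue fmx_ge0 card_gt0.
by apply: ge_sup => [|_ [z z_eigen <-]]; [exists (normc l), l | exact: r_ub].
Qed.

Lemma spectral_radius_ge0 : 0 <= spectral_radius A.
Proof.
have [l l_eigen _] := dominant_eigenvalue fmx_ge0 card_gt0.
exact: le_trans (normc_ge0 l) (normc_eigenvalue_le_spectral_radius l_eigen).
Qed.

End Nonnegative.
End SpectralRadius.

Section Phi.
Variables (R : realType) (E : finType) (P Q : E -> E -> R).
Variable g : E -> E -> E -> E -> R.
Hypotheses (P_stoch : stochastic P) (Q_stoch : stochastic Q).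

Local Notation cmx M := (map_mx (real_complex R) M).

Let P_ge0 x x' : 0 <= P x x'. Proof. by case: P_stoch. Qed.
Let Q_ge0 y y' : 0 <= Q y y'. Proof. by case: Q_stoch. Qed.

Let a x x' y y' := expR (g x y x' y') * Q y y'.
Let f n x y := pow_rowsum (Phi0 P Q g) n (x, y).
Let h n x y z := pow_rowsum (Phi1 P Q g) n (x, y, z).

Lemma Phi0_ge0 u v : 0 <= Phi0 P Q g u v.
Proof. by case: u v => [x y] [x' y']; rewrite /= !mulr_ge0 ?expR_ge0. Qed.

Lemma Phi1_ge0 u v : 0 <= Phi1 P Q g u v.
Proof. by case: u v => [[x y] z] [[x' y'] z']; rewrite /= !mulr_ge0 ?expR_ge0. Qed.

Lemma Phi0_rowsumS n x y :
  f n.+1 x y = \sum_x' P x x' * \sum_y' a x x' y y' * f n x' y'.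
Proof.
rewrite /f /=.
transitivity (\sum_x' \sum_y' P x x' * (a x x' y y' * f n x' y')).
  by rewrite pair_bigA; apply: eq_bigr => -[x' y'] _; rewrite /a /f /=; ring.
by apply: eq_bigr => x' _; rewrite mulr_sumr.
Qed.

Lemma Phi1_rowsumS n x y z : h n.+1 x y z =
  \sum_x' P x x' * \sum_y' \sum_z' a x x' y y' * a x x' z z' * h n x' y' z'.
Proof.
rewrite /h /=.
transitivity (\sum_x' \sum_y' \sum_z'
    P x x' * (a x x' y y' * a x x' z z' * h n x' y' z')).
  rewrite pair_bigA pair_bigA; apply: eq_bigr => -[[x' y'] z'] _.
  by rewrite /a /h /= expRD; ring.
apply: eq_bigr => x' _; rewrite mulr_sumr; apply: eq_bigr => y' _.
by rewrite mulr_sumr.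
Qed.

Lemma sqr_Phi0_rowsum_le n x (c : E -> R) :
  (\sum_y c y * f n x y) ^+ 2 <= \sum_y \sum_z c y * c z * h n x y z.
Proof.
elim: n x c => [|n IHn] x c.
  rewrite /f /h /= expr2 mulr_suml; rewrite le_eqVlt; apply/orP; left.
  apply/eqP/eq_bigr => y _.
  by rewrite mulr_sumr; apply: eq_bigr => z _; rewrite !mulr1.
(* After a step x -> x' the weights become c' x'; Jensen's inequality is then
   applied to the law P x of x'. *)
pose c' x' y' := \sum_y c y * a x x' y y'.
have step0 : \sum_y c y * f n.+1 x y =
    \sum_x' P x x' * \sum_y' c' x' y' * f n x' y'.
  under eq_bigr do rewrite Phi0_rowsumS mulr_sumr.
  rewrite exchange_big; apply: eq_bigr => x' _.
  under eq_bigr do rewrite mulrCA.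
  by rewrite -mulr_sumr sum_kernel_assoc.
have step1 : \sum_y \sum_z c y * c z * h n.+1 x y z =
    \sum_x' P x x' * \sum_y' \sum_z' c' x' y' * c' x' z' * h n x' y' z'.
  under eq_bigr do under eq_bigr do rewrite Phi1_rowsumS.
  rewrite (sum2_mixture_exchange (fun y z => c y * c z)).
  by apply: eq_bigr => x' _; rewrite sum2_kernel_assoc.
rewrite step0 step1; apply: le_trans (sqr_wmean_le _ _ _) _ => //.
  by case: P_stoch.
by apply: ler_sum => x' _; apply: ler_wpM2l.
Qed.

Lemma sqr_Phi0_mass_le n :
  pow_mass (Phi0 P Q g) n ^+ 2 <= #|E|%:R * pow_mass (Phi1 P Q g) n.
Proof.
have -> : pow_mass (Phi0 P Q g) n = \sum_x \sum_y f n x y.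
  by rewrite pair_bigA; apply: eq_bigr => -[x y].
have -> : pow_mass (Phi1 P Q g) n = \sum_x \sum_y \sum_z h n x y z.
  by rewrite pair_bigA pair_bigA; apply: eq_bigr => -[[x y] z].
apply: le_trans (sqr_sum_le_card _) _; apply: ler_wpM2l => //.
apply: ler_sum => x _; have := sqr_Phi0_rowsum_le n x (fun=> 1).
by under eq_bigr do rewrite mul1r; under [X in _ <= X -> _]eq_bigr do
  under eq_bigr do rewrite !mul1r.
Qed.

Lemma Phi0_rowsum_ge_geometric : exists2 m, 0 < m & forall n x y, m ^+ n <= f n x y.
Proof.
pose B := \sum_u `|g u.1.1.1 u.1.1.2 u.1.2 u.2|.
exists (expR (- B)) => [|n]; first exact: expR_gt0.
have a_ge x x' y y' : expR (- B) * Q y y' <= a x x' y y'.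
  apply: ler_wpM2r => //; rewrite ler_expR lerNl.
  apply: le_trans (ler_norm _) _; rewrite normrN.
  by apply: (@sumr_ge_term _ _ (fun u => `|g u.1.1.1 u.1.1.2 u.1.2 u.2|) (x, y, x', y')).
elim: n => [|n IHn] x y; first by rewrite expr0 /f.
rewrite Phi0_rowsumS exprS.
have [_ P_sum1] := P_stoch; have [_ Q_sum1] := Q_stoch.
rewrite -[X in X <= _]mul1r -(P_sum1 x) mulr_suml; apply: ler_sum => x' _.
apply: ler_wpM2l => //.
rewrite -[X in X <= _]mul1r -(Q_sum1 y) !mulr_suml; apply: ler_sum => y' _.
rewrite mulrA; apply: ler_pM.
- by rewrite mulr_ge0 ?expR_ge0.
- by rewrite exprn_ge0 ?expR_ge0.
- by rewrite mulrC; exact: a_ge.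
- exact: IHn.
Qed.

Lemma varphi0_gt0 (e : E) : 0 < varphi0 P Q g.
Proof.
have [m m_gt0 m_le] := Phi0_rowsum_ge_geometric.
apply: (lt_le_trans m_gt0).
apply: (spectral_radius_ge Phi0_ge0 (e, e) (K := 1)) => [|k]; first exact: (ltW m_gt0).
rewrite mul1r; apply: le_trans (m_le k e e) _.
exact: (sumr_ge_term (e, e) (pow_rowsum_ge0 Phi0_ge0 k)).
Qed.

Lemma sqr_varphi0_le (e : E) : varphi0 P Q g ^+ 2 <= varphi1 P Q g.
Proof.
have varphi0_ge0 := spectral_radius_ge0 Phi0_ge0 (e, e).
have varphi1_ge0 := spectral_radius_ge0 Phi1_ge0 (e, e, e).
have eigen_sqr_le z : eigenvalue (cmx (fmx (Phi0 P Q g))) z ->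
    Normc.normc z ^+ 2 <= varphi1 P Q g.
  move=> z_eigen; apply: (spectral_radius_ge Phi1_ge0 (e, e, e) (K := #|E|%:R)).
    exact: exprn_ge0 (normc_ge0 z).
  move=> k; rewrite exprAC; apply: le_trans (sqr_Phi0_mass_le k).
  apply: lerXn2r; rewrite ?nnegrE ?exprn_ge0 ?normc_ge0 ?(pow_mass_ge0 Phi0_ge0) //.
  exact: (eigenvalue_normX_le_pow_mass Phi0_ge0).
have : varphi0 P Q g <= Num.sqrt (varphi1 P Q g).
  apply: (spectral_radius_le Phi0_ge0 (e, e)) => z /eigen_sqr_le.
  by rewrite -ler_sqrt ?exprn_ge0 ?normc_ge0 // sqrtr_sqr ger0_norm ?normc_ge0.
by rewrite -ler_sqr ?nnegrE ?sqrtr_ge0 // sqr_sqrtr.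
Qed.

End Phi.

Theorem mainTheorem5 (R : realType) (E : finType) (P Q : E -> E -> R)
  (hPs : stochastic P) (hPi : irreducible P) (hPa : aperiodic P)
  (hQs : stochastic Q) (hQi : irreducible Q) (hQa : aperiodic Q)
  (g : E -> E -> E -> E -> R) :
  2 * ln (varphi0 P Q g) <= ln (varphi1 P Q g).
Proof.
have [e _ | E0] := pickP (@predT E); last first.
  have noE (x : E) : False by have := E0 x.
  rewrite /varphi0 /varphi1 !spectral_radius_eq0 ?ln0 ?mulr0 //.
    by case=> [[x _] _]; exact: noE x.
  by case=> [x _]; exact: noE x.
have varphi0_pos := varphi0_gt0 g hPs hQs e.
have varphi1_bound := sqr_varphi0_le g hPs hQs e.
rewrite -[2]/(2%:R) mulr_natl -lnXn // ler_ln ?posrE ?exprn_gt0 //.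
exact: lt_le_trans (exprn_gt0 2 varphi0_pos) varphi1_bound.
Qed.
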